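(* Under Assumption 1, if for every $k\in N$ the polyhedral set $S_k$ is empty, then the convex relaxation (R) and the Shor relaxation (S) are exact, i.e. $p^\star=v^\star=c^\star$.
   Context: Let $N=\{1,\dots,n\}$ and $M=\{1,\dots,m\}$. Let ${\bf D}$ and ${\bf A}^i$ ($i\in M$) be real diagonal $n\times n$ matrices, ${\bf c},{\bf a}_i\in\mathbb{R}^n$ ($a_{ij}$ denotes the $j$-th entry of ${\bf a}_i$) and $b_i\in\mathbb{R}$. The diagonal QCQP is (P): $c^\star=\inf\{{\bf x}^\top{\bf D}{\bf x}+2{\bf c}^\top{\bf x} : {\bf x}^\top{\bf A}^i{\bf x}+2{\bf a}_i^\top{\bf x}\le b_i,\ i\in M\}$. Its Shor relaxation is (S): $v^\star=\inf\{{\bf D}\bullet{\bf X}+2{\bf c}^\top{\bf x} : {\bf A}^i\bullet{\bf X}+2{\bf a}_i^\top{\bf x}\le b_i\ (i\in M),\ {\bf X}-{\bf x}{\bf x}^\top\succeq {\bf O}\}$, where ${\bf P}\bullet{\bf Q}=\mathrm{trace}({\bf P}{\bf Q})$. The convex relaxation is (R): $p^\star=\inf\{\sum_{j\in N}D_{jj}z_j+2\sum_{j\in N}c_jx_j : \sum_{j\in N}A^i_{jj}z_j+2\sum_{j\in N}a_{ij}x_j\le b_i\ (i\in M),\ x_j^2\le z_j\ (j\in N)\}$. Assumption 1: (i) the feasible region of (P) is nonempty; (ii) there exists $\bar{\bf y}\in\mathbb{R}^m$, $\bar{\bf y}\ge 0$, with $\sum_{i\in M}\bar y_i{\bf A}^i\succ{\bf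 O}$; (iii) the feasible region of (S) has nonempty interior. For $k\in N$, $S_k$ is the set of $\boldsymbol{\mu}\in\mathbb{R}^m$ satisfying: $D_{kk}+\sum_{i\in M}\mu_iA^i_{kk}=0$; $c_k+\sum_{i\in M}\mu_ia_{ik}=0$; $D_{jj}+\sum_{i\in M}\mu_iA^i_{jj}\ge 0$ for all $j\in N$, $j\ne k$; $\mu_i\ge 0$ for all $i\in M$. *)

From HB Require Import structures.
From mathcomp Require Import all_boot all_order all_algebra.
From mathcomp Require Import boolp classical_sets reals constructive_ereal ereal.
Set Implicit Arguments. Unset Strict Implicit. Unset Printing Implicit Defensive.
Import Order.TTheory GRing.Theory Num.Theory.
Local Open Scope ring_scope.
Local Open Scope classical_set_scope.

Section QCQP.
Variable R : realType.

Definition quadf n (M : 'M[R]_n) (x : 'cV[R]_n) : R := (x^T *m M *m x) 0 0.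
Definition linf n (c x : 'cV[R]_n) : R := (c^T *m x) 0 0.
Definition frob n (P Q : 'M[R]_n) : R := \tr (P *m Q).

Definition psd n (M : 'M[R]_n) : Prop :=
  M^T = M /\ forall v : 'cV[R]_n, 0 <= quadf M v.
Definition posdef n (M : 'M[R]_n) : Prop :=
  M^T = M /\ forall v : 'cV[R]_n, v != 0 -> 0 < quadf M v.

Variables (n m : nat) (D : 'M[R]_n) (A : 'I_m -> 'M[R]_n)
  (c : 'cV[R]_n) (a : 'I_m -> 'cV[R]_n) (b : 'I_m -> R).

Definition P_feas : set 'cV[R]_n :=
  [set x | forall i, quadf (A i) x + 2 * linf (a i) x <= b i].
Definition cstar : \bar R :=
  ereal_inf [set (quadf D x + 2 * linf c x)%:E | x in P_feas].

Definition S_feas : set ('cV[R]_n * 'M[R]_n) :=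
  [set p : 'cV[R]_n * 'M[R]_n | (forall i, frob (A i) p.2 + 2 * linf (a i) p.1 <= b i)
           /\ psd (p.2 - p.1 *m p.1^T)].
Definition vstar : \bar R :=
  ereal_inf [set (frob D p.2 + 2 * linf c p.1)%:E | p in S_feas].

Definition R_feas : set ('cV[R]_n * 'cV[R]_n) :=
  [set p : 'cV[R]_n * 'cV[R]_n | (forall i, \sum_(j < n) A i j j * p.2 j 0
                      + 2 * \sum_(j < n) a i j 0 * p.1 j 0 <= b i)
           /\ (forall j, p.1 j 0 ^+ 2 <= p.2 j 0)].
Definition pstar : \bar R :=
  ereal_inf [set (\sum_(j < n) D j j * p.2 j 0
                  + 2 * \sum_(j < n) c j 0 * p.1 j 0)%:E | p in R_feas].

(* Assumption 1 (iii): the feasible region of (S) has nonempty interior,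
   as a subset of R^n x (symmetric n x n matrices), using the (equivalent)
   max-norm balls on coordinates. *)
Definition S_nonempty_interior : Prop :=
  exists (x0 : 'cV[R]_n) (X0 : 'M[R]_n), X0^T = X0 /\ exists2 e : R, 0 < e &
    forall (x : 'cV[R]_n) (X : 'M[R]_n), X^T = X ->
      (forall j, `|x j 0 - x0 j 0| < e) ->
      (forall j k, `|X j k - X0 j k| < e) ->
      S_feas (x, X).

Definition Assumption1 : Prop :=
  (exists x, P_feas x) /\
  (exists y : 'I_m -> R, (forall i, 0 <= y i) /\ posdef (\sum_i y i *: A i)) /\
  S_nonempty_interior.

Definition S_set (k : 'I_n) : set ('I_m -> R) :=
  [set mu | D k k + \sum_i mu i * A i k k = 0
            /\ c k 0 + \sum_i mu i * a i k 0 = 0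
            /\ (forall j, j != k -> 0 <= D j j + \sum_i mu i * A i j j)
            /\ (forall i, 0 <= mu i)].

End QCQP.

From mathcomp Require Import all_boot all_order all_algebra.
From mathcomp Require Import boolp classical_sets reals constructive_ereal ereal.
From mathcomp Require Import topology normedtype derive.
From mathcomp Require Import ring lra.
From Stdlib Require List.
Set Implicit Arguments. Unset Strict Implicit. Unset Printing Implicit Defensive.
Import Order.TTheory GRing.Theory Num.Theory.
Import numFieldNormedType.Exports.
Local Open Scope ring_scope.
Local Open Scope classical_set_scope.

(* For diagonal data there are value-preserving maps (P) -> (S),
   x |-> (x, x x^T), and (S) -> (R), (x, X) |-> (x, diag X); hence
   p* <= v* <= c*. For c* <= p* we show that (R) has a minimizer (x, z) and
   that it is tight, z_k = x_k^2 for all k; then x is feasible for (P) with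
   the same value. *)

Section FourierMotzkin.
Variable R : realFieldType.

(* Affine functionals [y |-> dot d w y + r] on R^d are pairs [(w, r)]; the
   coefficient vector is indexed by nat and only its first d entries count. *)
Definition dot d (w y : nat -> R) : R := \sum_(i < d) w i * y i.

Definition conic_comb (s : R) (p : (nat -> R) * R) (t : R) (q : (nat -> R) * R) :
  (nat -> R) * R := (fun i => s * p.1 i + t * q.1 i, s * p.2 + t * q.2).

Inductive cone (C : list ((nat -> R) * R)) : (nat -> R) * R -> Prop :=
  | cone_gen p : List.In p C -> cone C p
  | cone_comb p q s t : cone C p -> cone C q -> 0 <= s -> 0 <= t ->
      cone C (conic_comb s p t q).

Lemma cone_trans C C' q :
  (forall p, List.In p C' -> cone C p) -> cone C' q -> cone C q.
Proof. by move=> sub; elim=> [p /sub //|p p' s t _ Hp _ Hp' s0 t0]; apply: cone_comb. Qed.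

Lemma dot_conic_comb d s p t q y :
  dot d (conic_comb s p t q).1 y = s * dot d p.1 y + t * dot d q.1 y.
Proof. by rewrite /dot !mulr_sumr -big_split; apply: eq_bigr => i _ /=; ring. Qed.

Lemma dot_scale d s w y : dot d (fun i => s * w i) y = s * dot d w y.
Proof. by rewrite /dot mulr_sumr; apply: eq_bigr => i _; rewrite mulrA. Qed.

Lemma separate_bounds (L U : list R) :
  (forall l u, List.In l L -> List.In u U -> l <= u) ->
  exists t, (forall l, List.In l L -> l <= t) /\ (forall u, List.In u U -> t <= u).
Proof.
elim: L => [|l L IH] LU.
  elim: U {LU} => [|u U [t [_ Ht]]]; first by exists 0.
  exists (Num.min u t); split => // v /= [<-|hv]; first by rewrite ge_min lexx.
  by rewrite ge_min Ht // orbT.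
have [t [Lt tU]] : exists t, (forall l, List.In l L -> l <= t) /\
    (forall u, List.In u U -> t <= u).
  by apply: IH => l' u hl hu; apply: LU => //=; right.
exists (Num.max l t); split => [l' /= [<-|hl]|u hu].
- by rewrite le_max lexx.
- by rewrite le_max Lt // orbT.
- by rewrite ge_max tU // andbT; apply: LU => //=; left.
Qed.

Lemma eliminate_le (pd qd X Y : R) : 0 < pd -> qd < 0 -> pd * X - qd * Y <= 0 ->
  - X / qd <= - Y / pd.
Proof.
move=> pd_gt0 qd_lt0 h; rewrite -subr_ge0.
have -> : - Y / pd - - X / qd = (pd * X - qd * Y) / (pd * qd).
  by field; rewrite (gt_eqF pd_gt0) (lt_eqF qd_lt0).
by apply: mulr_le0 => //; rewrite invr_le0 ltW // pmulr_rlt0.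
Qed.

(* One step of Fourier-Motzkin elimination of the coordinate d: keep the
   functionals not involving y_d, and combine every pair with coefficients of
   opposite signs so that y_d cancels. *)
Definition fm_pair d (pq : ((nat -> R) * R) * ((nat -> R) * R)) : (nat -> R) * R :=
  conic_comb (- pq.2.1 d) pq.1 (pq.1.1 d) pq.2.

Definition fm_elim d (C : list ((nat -> R) * R)) : list ((nat -> R) * R) :=
  (List.filter (fun p => p.1 d == 0) C ++
   List.map (fm_pair d) (List.list_prod (List.filter (fun p => 0 < p.1 d) C)
                                         (List.filter (fun p => p.1 d < 0) C)))%list.

Lemma fm_elim_coord d C p : List.In p (fm_elim d C) -> p.1 d = 0.
Proof.
case/(List.in_app_or (List.filter _ C)) => [/List.filter_In [_ /eqP //]|].
by case/List.in_map_iff => -[p1 q1] [<- _] /=; ring.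
Qed.

Lemma fm_elim_cone d C p : List.In p (fm_elim d C) -> cone C p.
Proof.
case/(List.in_app_or (List.filter _ C)) => [/List.filter_In [hp _]|]; first exact: cone_gen.
case/List.in_map_iff => -[p1 q1] [<- /List.in_prod_iff [/List.filter_In [h1 s1]
  /List.filter_In [h2 s2]]].
by apply: cone_comb; rewrite ?oppr_ge0 ?ltW //; apply: cone_gen.
Qed.

Lemma fm_elim_lift d C y :
  (forall p, List.In p (fm_elim d C) -> dot d p.1 y + p.2 <= 0) ->
  exists y', forall p, List.In p C -> dot d.+1 p.1 y' + p.2 <= 0.
Proof.
move=> Hy; pose bound p := - (dot d p.1 y + p.2) / p.1 d.
have [t [Lt tU]] : exists t,
    (forall l, List.In l (List.map bound (List.filter (fun p => p.1 d < 0) C)) -> l <= t) /\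
    (forall u, List.In u (List.map bound (List.filter (fun p => 0 < p.1 d) C)) -> t <= u).
  apply: separate_bounds => l u /List.in_map_iff [q [<- hq]] /List.in_map_iff [p [<- hp]].
  have [q_in q_lt0] := proj1 (List.filter_In _ _ _) hq.
  have [p_in p_gt0] := proj1 (List.filter_In _ _ _) hp.
  apply: eliminate_le => //; apply: le_trans (Hy (fm_pair d (p, q)) _).
    by rewrite dot_conic_comb /= le_eqVlt; apply/orP; left; apply/eqP; ring.
  by apply/List.in_or_app; right; apply/List.in_map/List.in_prod; apply/List.filter_In.
exists (fun i => if i == d then t else y i) => p hp.
have -> : dot d.+1 p.1 (fun i => if i == d then t else y i) = dot d p.1 y + p.1 d * t.
  rewrite /dot big_ord_recr /= eqxx; congr (_ + _).
  by apply: eq_bigr => i _; rewrite ltn_eqF.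
case: (ltgtP (p.1 d) 0) => hs.
- have := Lt _ (List.in_map bound _ _ (proj2 (List.filter_In _ _ _) (conj hp hs))).
  by rewrite /bound ler_ndivrMr // => h; lra.
- have := tU _ (List.in_map bound _ _ (proj2 (List.filter_In _ _ _) (conj hp hs))).
  by rewrite /bound ler_pdivlMr // => h; lra.
- have := Hy p; rewrite hs mul0r addr0; apply.
  by apply/List.in_or_app; left; apply/List.filter_In; rewrite hs eqxx.
Qed.

Theorem farkas d : forall C : list ((nat -> R) * R),
  (exists y, forall p, List.In p C -> dot d p.1 y + p.2 <= 0) \/
  (exists q, cone C q /\ (forall i, (i < d)%N -> q.1 i = 0) /\ 0 < q.2).
Proof.
elim: d => [|d IH] C.
  have [H|H] := pselect (forall p, List.In p C -> p.2 <= 0).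
    by left; exists (fun=> 0) => p /H; rewrite /dot big_ord0 add0r.
  right; move/existsNP: H => [p /not_implyP [hp /negP]]; rewrite -ltNge => hp2.
  by exists p; split; [exact: cone_gen | split].
have [[y Hy]|[q [hq [hq0 hq2]]]] := IH (fm_elim d C); first by left; exact: fm_elim_lift Hy.
right; exists q; split; first exact: cone_trans (@fm_elim_cone d C) hq.
split => // i; rewrite ltnS leq_eqVlt => /orP [/eqP ->|]; last exact: hq0.
elim: hq {hq0 hq2} => [p /fm_elim_coord //|p0 q0 s t _ e1 _ e2 _ _] /=.
by rewrite e1 e2; ring.
Qed.

Lemma cone_family (I : finType) (p : I -> (nat -> R) * R) q :
  cone [seq p t | t <- enum I] q -> exists lam : I -> R, (forall t, 0 <= lam t) /\
    (forall i, q.1 i = \sum_t lam t * (p t).1 i) /\ q.2 = \sum_t lam t * (p t).2.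
Proof.
elim=> [_ /List.in_map_iff [t0 [<- _]]|p1 p2 s t _ [l1 [l1_ge0 [e1 e1']]] _
    [l2 [l2_ge0 [e2 e2']]] s0 t0].
  have pick (F : I -> R) : \sum_t (t == t0)%:R * F t = F t0.
    by rewrite (bigD1 t0) //= eqxx mul1r big1 ?addr0 // => t /negbTE ->; rewrite mul0r.
  exists (fun t => (t == t0)%:R); split => [t|]; first exact: ler0n.
  by split => [i|]; rewrite pick.
exists (fun u => s * l1 u + t * l2 u); split => [u|]; first by rewrite addr_ge0 ?mulr_ge0.
have comb (F : I -> R) : \sum_u (s * l1 u + t * l2 u) * F u =
    s * \sum_u l1 u * F u + t * \sum_u l2 u * F u.
  by rewrite !mulr_sumr -big_split; apply: eq_bigr => u _ /=; ring.
by split => [i|] /=; rewrite comb ?e1 ?e2 ?e1' ?e2'.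
Qed.

Lemma in_enum_list (I : finType) (t : I) : List.In t (enum I).
Proof.
have : t \in enum I by rewrite mem_enum.
by elim: (enum I) => //= u s IH; rewrite inE => /orP [/eqP ->|/IH]; [left|right].
Qed.

Theorem farkas_family d (I : finType) (p : I -> (nat -> R) * R) :
  (exists y, forall t, dot d (p t).1 y + (p t).2 <= 0) \/
  (exists lam : I -> R, (forall t, 0 <= lam t) /\
     (forall y, \sum_t lam t * dot d (p t).1 y = 0) /\ 0 < \sum_t lam t * (p t).2).
Proof.
case: (farkas d [seq p t | t <- enum I]) =>
  [[y Hy]|[q [/cone_family [lam [lam0 [e1 e2]]] [q0 q2]]]].
  by left; exists y => t; apply: Hy; apply: List.in_map; exact: in_enum_list.
right; exists lam; split => //; split; last by rewrite -e2.
move=> y; rewrite /dot; under eq_bigr do rewrite mulr_sumr.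
rewrite exchange_big big1 // => i _ /=.
under eq_bigr do rewrite mulrA.
by rewrite -mulr_suml -e1 q0 ?mul0r.
Qed.

End FourierMotzkin.

Lemma sum_single (V : nmodType) n (j : 'I_n) (F : 'I_n -> V) :
  (forall l, l != j -> F l = 0) -> \sum_l F l = F j.
Proof. by move=> F0; rewrite (bigD1 j) //= big1 ?addr0. Qed.
Arguments sum_single {V n} j {F}.

Lemma sum_option (V : nmodType) (I : finType) (F : option I -> V) :
  \sum_t F t = F None + \sum_i F (Some i).
Proof.
rewrite (bigD1 None) //=; congr (_ + _).
by rewrite (reindex_omap Some id) //= => [|[]//]; apply: eq_bigl => i; rewrite eqxx.
Qed.

Section DiagonalForms.
Variable R : realType.

Lemma sum_pick n (F : 'I_n -> R) (k : 'I_n) : \sum_l F l * (l == k)%:R = F k.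
Proof. by rewrite (sum_single k) ?eqxx ?mulr1 // => l /negbTE ->; rewrite mulr0. Qed.

Lemma sum_mul0 n (F : 'I_n -> R) : \sum_l F l * 0 = 0.
Proof. by rewrite big1 // => l _; rewrite mulr0. Qed.

Lemma linfE n (c x : 'cV[R]_n) : linf c x = \sum_j c j 0 * x j 0.
Proof. by rewrite /linf mxE; apply: eq_bigr => j _; rewrite mxE. Qed.

Lemma quadfE n (M : 'M[R]_n) x : quadf M x = \sum_k \sum_l x k 0 * M k l * x l 0.
Proof.
rewrite /quadf mxE exchange_big /=; apply: eq_bigr => l _.
by rewrite mxE mulr_suml; apply: eq_bigr => k _; rewrite !mxE.
Qed.

Lemma quadf_diag n (M : 'M[R]_n) x : is_diag_mx M ->
  quadf M x = \sum_j M j j * x j 0 ^+ 2.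
Proof.
move=> /is_diag_mxP M0; rewrite quadfE; apply: eq_bigr => k _.
rewrite (sum_single k) => [|l kl]; first by rewrite mulrAC mulrC expr2.
by rewrite M0 ?mulr0 ?mul0r // eq_sym.
Qed.

Lemma frob_diag n (M X : 'M[R]_n) : is_diag_mx M -> frob M X = \sum_j M j j * X j j.
Proof.
move=> /is_diag_mxP M0; rewrite /frob /mxtrace; apply: eq_bigr => j _.
by rewrite mxE (sum_single j) // => k jk; rewrite M0 ?mul0r // eq_sym.
Qed.

Lemma frob_outer n (M : 'M[R]_n) x : frob M (x *m x^T) = quadf M x.
Proof. by rewrite /frob /quadf mulmxA mxtrace_mulC mulmxA /mxtrace big_ord1. Qed.

Lemma outer_diag n (x : 'cV[R]_n) j : (x *m x^T) j j = x j 0 ^+ 2.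
Proof. by rewrite mxE big_ord1 mxE expr2. Qed.

Lemma quadf_delta n (M : 'M[R]_n) j : quadf M (delta_mx j 0) = M j j.
Proof.
rewrite quadfE (sum_single j) => [|k kj]; last first.
  by apply: big1 => l _; rewrite !mxE (negbTE kj) !mul0r.
rewrite (sum_single j) => [|l lj]; first by rewrite !mxE eqxx mul1r mulr1.
by rewrite !mxE (negbTE lj) mulr0.
Qed.

Lemma psd_diag n (M : 'M[R]_n) j : psd M -> 0 <= M j j.
Proof. by move=> [_ M_ge0]; rewrite -quadf_delta. Qed.

Lemma posdef_diag n (M : 'M[R]_n) j : posdef M -> 0 < M j j.
Proof.
move=> [_ M_gt0]; rewrite -quadf_delta; apply: M_gt0.
by apply/eqP => /matrixP /(_ j 0); rewrite !mxE !eqxx => /eqP; rewrite oner_eq0.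
Qed.

(* A pair of vectors of R^n, seen as one nat-indexed vector of R^(n+n). *)
Definition pairv n (u v : 'I_n -> R) (k : nat) : R :=
  if insub k is Some i then u i else if insub (k - n)%N is Some i then v i else 0.

Lemma pairv_l n (u v : 'I_n -> R) (i : 'I_n) : pairv u v i = u i.
Proof. by rewrite /pairv valK. Qed.

Lemma pairv_r n (u v : 'I_n -> R) (i : 'I_n) : pairv u v (n + i) = v i.
Proof. by rewrite /pairv insubN ?addKn ?valK // -ltnNge leq_addr. Qed.

Lemma dot_pairv n (u v : 'I_n -> R) y :
  dot (n + n) (pairv u v) y = \sum_i u i * y i + \sum_i v i * y (n + i)%N.
Proof.
rewrite /dot big_split_ord /=.
by congr (_ + _); apply: eq_bigr => i _; rewrite ?pairv_l ?pairv_r.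
Qed.

End DiagonalForms.

Section ConvexRelaxation.
Variables (R : realType) (n m : nat) (D : 'M[R]_n) (A : 'I_m -> 'M[R]_n)
  (c : 'cV[R]_n) (a : 'I_m -> 'cV[R]_n) (b : 'I_m -> R).

Definition objR (p : 'cV[R]_n * 'cV[R]_n) : R :=
  \sum_(j < n) D j j * p.2 j 0 + 2 * \sum_(j < n) c j 0 * p.1 j 0.
Definition conR i (p : 'cV[R]_n * 'cV[R]_n) : R :=
  \sum_(j < n) A i j j * p.2 j 0 + 2 * \sum_(j < n) a i j 0 * p.1 j 0.

Section Optimality.
Variables (x z : 'cV[R]_n).
Hypothesis feas : R_feas A a b (x, z).
Hypothesis opt : forall p, R_feas A a b p -> objR (x, z) <= objR p.

Definition active i := conR i (x, z) == b i.
Definition tight j := z j 0 == x j 0 ^+ 2.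

(* Moving from (x, z) along a direction y of R^(n+n): its first n coordinates
   move x, the last n move z. The objective and the constraints then change
   at the following rates. *)
Definition shift t (y : nat -> R) : 'cV[R]_n * 'cV[R]_n :=
  (\col_j (x j 0 + t * y j), \col_j (z j 0 + t * y (n + j)%N)).
Definition objD (y : nat -> R) : R :=
  2 * \sum_j c j 0 * y j + \sum_j D j j * y (n + j)%N.
Definition conD i (y : nat -> R) : R :=
  2 * \sum_j a i j 0 * y j + \sum_j A i j j * y (n + j)%N.
Definition quadD j (y : nat -> R) : R := 2 * x j 0 * y j - y (n + j)%N.

Lemma sum_shift (u : 'I_n -> R) (v : 'cV[R]_n) (w : 'I_n -> R) t :
  \sum_j u j * (\col_l (v l 0 + t * w l)) j 0 = \sum_j u j * v j 0 + t * \sum_j u j * w j.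
Proof.
by rewrite mulr_sumr -big_split; apply: eq_bigr => j _; rewrite mxE /=; ring.
Qed.

Lemma objR_shift t y : objR (shift t y) = objR (x, z) + t * objD y.
Proof. by rewrite /objR /objD /= !sum_shift; ring. Qed.

Lemma conR_shift i t y : conR i (shift t y) = conR i (x, z) + t * conD i y.
Proof. by rewrite /conR /conD /= !sum_shift; ring. Qed.

Lemma con_eventually i y : (active i -> conD i y <= 0) ->
  \forall t \near 0^'+, conR i (shift t y) <= b i.
Proof.
move=> act_dec; have con_le : conR i (x, z) <= b i := feas.1 i.
have [/eqP act|inact] := boolP (active i).
  near=> t; have t_gt0 : 0 < t by near: t; exact: nbhs_right_gt.
  by rewrite conR_shift act gerDl mulr_ge0_le0 ?(ltW t_gt0) // act_dec //; apply/eqP.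
have slack : 0 < b i - conR i (x, z).
  by rewrite subr_gt0 lt_neqAle con_le andbT; apply: contraNneq inact => eq; apply/eqP.
have rate_gt0 : 0 < `|conD i y| + 1 := ltr_wpDl (normr_ge0 _) ltr01.
near=> t; rewrite conR_shift.
have t_gt0 : 0 < t by near: t; exact: nbhs_right_gt.
have : t < (b i - conR i (x, z)) / (`|conD i y| + 1).
  by near: t; apply: nbhs_right_lt; exact: divr_gt0.
rewrite ltr_pdivlMr // => small.
have := ler_norm (conD i y); have := normr_ge0 (conD i y); nra.
Unshelve. all: by end_near.
Qed.

Lemma quad_eventually j y : (tight j -> quadD j y + 1 <= 0) ->
  \forall t \near 0^'+, (shift t y).1 j 0 ^+ 2 <= (shift t y).2 j 0.
Proof.
move=> tight_dec; have quad_le : x j 0 ^+ 2 <= z j 0 := feas.2 j.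
have step t : z j 0 + t * y (n + j)%N - (x j 0 + t * y j) ^+ 2 =
    (z j 0 - x j 0 ^+ 2) - t * quadD j y - t ^+ 2 * y j ^+ 2 by rewrite /quadD; ring.
have d2 := sqr_ge0 (y j).
have [/eqP tj|ntj] := boolP (tight j).
  have h_le := tight_dec (introT eqP tj).
  have d2_gt0 : 0 < y j ^+ 2 + 1 := ltr_wpDl d2 ltr01.
  near=> t; rewrite !mxE -subr_ge0 step tj subrr.
  have t_gt0 : 0 < t by near: t; exact: nbhs_right_gt.
  have : t < (y j ^+ 2 + 1)^-1 by near: t; apply: nbhs_right_lt; rewrite invr_gt0.
  rewrite -[t < _](ltr_pM2r d2_gt0) mulVf ?gt_eqF // => small.
  nra.
have r_gt0 : 0 < z j 0 - x j 0 ^+ 2.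
  by rewrite subr_gt0 lt_neqAle quad_le andbT eq_sym; apply: contraNneq ntj => eq; apply/eqP.
have rate_gt0 : 0 < `|quadD j y| + y j ^+ 2 + 1.
  by apply: ltr_wpDl ltr01; rewrite addr_ge0.
near=> t; rewrite !mxE -subr_ge0 step.
have t_gt0 : 0 < t by near: t; exact: nbhs_right_gt.
have t_lt1 : t < 1 by near: t; exact: nbhs_right_lt.
have : t < (z j 0 - x j 0 ^+ 2) / (`|quadD j y| + y j ^+ 2 + 1).
  by near: t; apply: nbhs_right_lt; exact: divr_gt0.
rewrite ltr_pdivlMr // => small.
have := ler_norm (quadD j y); have := normr_ge0 (quadD j y); nra.
Unshelve. all: by end_near.
Qed.

Lemma no_descent y : objD y + 1 <= 0 -> (forall i, active i -> conD i y <= 0) ->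
  (forall j, tight j -> quadD j y + 1 <= 0) -> False.
Proof.
move=> obj_dec con_dec quad_dec.
have better : \forall t \near 0^'+,
    R_feas A a b (shift t y) /\ objR (shift t y) < objR (x, z).
  near=> t; split; [split|].
  - by near: t; apply: filter_forall => i; exact: con_eventually (con_dec i).
  - by near: t; apply: filter_forall => j; exact: quad_eventually (quad_dec j).
  - have t_gt0 : 0 < t by near: t; exact: nbhs_right_gt.
    by rewrite objR_shift gtrDl pmulr_rlt0 //; lra.
have [t [t_feas t_better]] := filter_ex better.
by have := opt t_feas; rewrite leNgt t_better.
Unshelve. all: by end_near.
Qed.

Definition objW : nat -> R := pairv (fun j => 2 * c j 0) (fun j => D j j).
Definition conW i : nat -> R := pairv (fun j => 2 * a i j 0) (fun j => A i j j).
Definition quadW j : nat -> R :=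
  pairv (fun l => (l == j)%:R * (2 * x j 0)) (fun l => - (l == j)%:R).

Lemma objD_pairv u v :
  objD (pairv u v) = 2 * \sum_j c j 0 * u j + \sum_j D j j * v j.
Proof.
by rewrite /objD; under eq_bigr do rewrite pairv_l; under [in X in _ + X]eq_bigr do rewrite pairv_r.
Qed.

Lemma conD_pairv i u v :
  conD i (pairv u v) = 2 * \sum_j a i j 0 * u j + \sum_j A i j j * v j.
Proof.
by rewrite /conD; under eq_bigr do rewrite pairv_l; under [in X in _ + X]eq_bigr do rewrite pairv_r.
Qed.

Lemma quadD_pairv j u v : quadD j (pairv u v) = 2 * x j 0 * u j - v j.
Proof. by rewrite /quadD pairv_l pairv_r. Qed.

Lemma dot_objW y : dot (n + n) objW y = objD y.
Proof.
by rewrite dot_pairv /objD mulr_sumr; congr (_ + _); apply: eq_bigr => j _; rewrite mulrA.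
Qed.

Lemma dot_conW i y : dot (n + n) (conW i) y = conD i y.
Proof.
by rewrite dot_pairv /conD mulr_sumr; congr (_ + _); apply: eq_bigr => j _; rewrite mulrA.
Qed.

Lemma dot_quadW j y : dot (n + n) (quadW j) y = quadD j y.
Proof.
rewrite dot_pairv /quadD !(sum_single j) ?eqxx ?mul1r ?mulN1r //.
  by move=> l /negbTE ->; rewrite oppr0 mul0r.
by move=> l /negbTE ->; rewrite !mul0r.
Qed.

(* The first-order system as a finite family of affine functionals in the
   direction: objective rate plus 1, active constraint rates, tight convex
   rates plus 1; inactive constraints are switched off. *)
Definition fj_system (t : option ('I_m + 'I_n)) : (nat -> R) * R :=
  match t with
  | None => (objW, 1)
  | Some (inl i) => (fun k => (active i)%:R * conW i k, 0)
  | Some (inr j) => (fun k => (tight j)%:R * quadW j k, (tight j)%:R)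
  end.

Definition fj_multipliers (l0 : R) (mu : 'I_m -> R) (nu : 'I_n -> R) : Prop :=
  [/\ 0 <= l0, forall i, 0 <= mu i /\ (~~ active i -> mu i = 0),
      forall j, 0 <= nu j /\ (~~ tight j -> nu j = 0),
      forall y, l0 * objD y + \sum_i mu i * conD i y + \sum_j nu j * quadD j y = 0
    & 0 < l0 + \sum_j nu j].

Lemma fritz_john : exists l0 mu nu, fj_multipliers l0 mu nu.
Proof.
case: (farkas_family (n + n) fj_system) => [[y Hy]|[lam [lam_ge0 [stat pos]]]].
  exfalso; apply: (@no_descent y).
  - by have := Hy None; rewrite /= dot_objW.
  - by move=> i act; have := Hy (Some (inl i)); rewrite /= dot_scale dot_conW act mul1r addr0.
  - by move=> j tj; have := Hy (Some (inr j)); rewrite /= dot_scale dot_quadW tj mul1r.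
exists (lam None), (fun i => (active i)%:R * lam (Some (inl i))),
  (fun j => (tight j)%:R * lam (Some (inr j))); split => //.
- move=> i; split; first by rewrite mulr_ge0.
  by move/negbTE => ->; rewrite mul0r.
- move=> j; split; first by rewrite mulr_ge0.
  by move/negbTE => ->; rewrite mul0r.
- move=> y; apply: etrans (stat y); rewrite sum_option big_sumType /= dot_objW addrA.
  by congr (_ + _ + _); apply: eq_bigr => k _; rewrite dot_scale ?dot_conW ?dot_quadW; ring.
- move: pos; rewrite sum_option big_sumType /= mulr1 big1 ?add0r => [|i _]; last exact: mulr0.
  by under eq_bigr do rewrite mulrC.
Qed.

Definition dirx (k : 'I_n) : nat -> R := pairv (fun l => (l == k)%:R) (fun=> 0).
Definition dirz (k : 'I_n) : nat -> R := pairv (fun=> 0) (fun l => (l == k)%:R).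

Lemma objD_dirx k : objD (dirx k) = 2 * c k 0.
Proof. by rewrite objD_pairv sum_pick sum_mul0 addr0. Qed.
Lemma conD_dirx i k : conD i (dirx k) = 2 * a i k 0.
Proof. by rewrite conD_pairv sum_pick sum_mul0 addr0. Qed.
Lemma quadD_dirx j k : quadD j (dirx k) = 2 * x j 0 * (j == k)%:R.
Proof. by rewrite quadD_pairv subr0. Qed.
Lemma objD_dirz k : objD (dirz k) = D k k.
Proof. by rewrite objD_pairv sum_pick sum_mul0 mulr0 add0r. Qed.
Lemma conD_dirz i k : conD i (dirz k) = A i k k.
Proof. by rewrite conD_pairv sum_pick sum_mul0 mulr0 add0r. Qed.
Lemma quadD_dirz j k : quadD j (dirz k) = - (j == k)%:R.
Proof. by rewrite quadD_pairv mulr0 sub0r. Qed.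

Section Multipliers.
Variables (l0 : R) (mu : 'I_m -> R) (nu : 'I_n -> R).
Hypothesis fj : fj_multipliers l0 mu nu.

Lemma stationarity_z k : l0 * D k k + \sum_i mu i * A i k k = nu k.
Proof.
have [_ _ _ stat _] := fj; move: (stat (dirz k)); rewrite objD_dirz.
under eq_bigr do rewrite conD_dirz.
under [in X in _ + X = _]eq_bigr do rewrite quadD_dirz mulrN.
by rewrite sumrN sum_pick => /eqP; rewrite subr_eq0 => /eqP.
Qed.

Lemma stationarity_x k : l0 * c k 0 + \sum_i mu i * a i k 0 + nu k * x k 0 = 0.
Proof.
have [_ _ _ stat _] := fj; move: (stat (dirx k)); rewrite objD_dirx.
under eq_bigr do rewrite conD_dirx mulrCA.
under [in X in _ + X = _]eq_bigr do rewrite quadD_dirx mulrA.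
rewrite sum_pick -mulr_sumr => /eqP.
have -> : l0 * (2 * c k 0) + 2 * \sum_i mu i * a i k 0 + nu k * (2 * x k 0) =
  2 * (l0 * c k 0 + \sum_i mu i * a i k 0 + nu k * x k 0) by ring.
by rewrite mulf_eq0 pnatr_eq0 => /eqP.
Qed.

(* A Slater point of (R) rules out a vanishing objective multiplier: moving
   towards it does not increase any active constraint and strictly decreases
   every tight convex one. *)
Lemma multiplier_obj_pos xs zs : (forall i, conR i (xs, zs) <= b i) ->
  (forall j, xs j 0 ^+ 2 < zs j 0) -> 0 < l0.
Proof.
move=> slater_con slater_quad; have [l0_ge0 mu_ok nu_ok stat pos] := fj.
rewrite lt_neqAle l0_ge0 andbT eq_sym; apply/negP => /eqP l0_0.
pose y := pairv (fun j => xs j 0 - x j 0) (fun j => zs j 0 - z j 0).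
have con_le i : mu i * conD i y <= 0.
  have [mu_ge0 mu_act] := mu_ok i.
  have [/eqP act|inact] := boolP (active i); last by rewrite mu_act // mul0r.
  apply: mulr_ge0_le0 => //; rewrite conD_pairv.
  under eq_bigr do rewrite mulrBr; under [in X in _ + X]eq_bigr do rewrite mulrBr.
  rewrite !sumrB; have := slater_con i; rewrite -act /conR /=; lra.
have quad_le j : nu j * quadD j y <= 0.
  have [nu_ge0 nu_tight] := nu_ok j.
  have [/eqP tj|ntj] := boolP (tight j); last by rewrite nu_tight // mul0r.
  apply: mulr_ge0_le0 => //; rewrite quadD_pairv tj.
  by have := slater_quad j; have := sqr_ge0 (xs j 0 - x j 0); nra.
have [k /andP [_ nu_k]] : exists k, true && (0 < nu k).
  apply: psumr_neq0P => [j _|sum0]; first by case: (nu_ok j).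
  by move: pos; rewrite l0_0 add0r sum0 ltxx.
have tk : tight k by apply: contraT => /(nu_ok k).2 nu0; rewrite nu0 ltxx in nu_k.
have quad_lt : \sum_j nu j * quadD j y < 0.
  have quad_k : nu k * quadD k y < 0.
    rewrite pmulr_rlt0 // quadD_pairv (eqP tk).
    by have := slater_quad k; have := sqr_ge0 (xs k 0 - x k 0); nra.
  rewrite (bigD1 k) //=.
  have : \sum_(j | j != k) nu j * quadD j y <= 0 by apply: sumr_le0.
  lra.
have := stat y; rewrite l0_0 mul0r add0r.
have : \sum_i mu i * conD i y <= 0 by apply: sumr_le0 => i _; exact: con_le.
lra.
Qed.

End Multipliers.

(* Main step: when every S_k is empty, a minimizer of (R) satisfies
   z_k = x_k^2 in every coordinate. Otherwise the normalized multipliers of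
   the active linear constraints would lie in S_k. *)
Theorem optimum_tight xs zs : (forall i, conR i (xs, zs) <= b i) ->
  (forall j, xs j 0 ^+ 2 < zs j 0) -> (forall k, S_set D A c a k = set0) ->
  forall k, z k 0 = x k 0 ^+ 2.
Proof.
move=> slater_con slater_quad S_empty k; apply/eqP; apply: contraT => ntk.
have [l0 [mu [nu fj]]] := fritz_john.
have l0_gt0 := multiplier_obj_pos fj slater_con slater_quad.
have [_ mu_ok nu_ok _ _] := fj.
have nu_k : nu k = 0 := (nu_ok k).2 ntk.
have normalize V W U : l0 * V + W = U -> V + W / l0 = U / l0.
  by move=> <-; field; rewrite gt_eqF.
have sum_div (F : 'I_m -> R) : \sum_i mu i / l0 * F i = (\sum_i mu i * F i) / l0.
  by rewrite mulr_suml; apply: eq_bigr => i _; rewrite mulrAC.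
suff : S_set D A c a k (fun i => mu i / l0) by rewrite S_empty.
split; [|split; [|split]].
- by rewrite sum_div (normalize _ _ _ (stationarity_z fj k)) nu_k mul0r.
- have := stationarity_x fj k; rewrite nu_k mul0r addr0 => /normalize.
  by rewrite sum_div mul0r.
- move=> j _; rewrite sum_div (normalize _ _ _ (stationarity_z fj j)).
  exact: divr_ge0 (nu_ok j).1 (ltW l0_gt0).
- by move=> i; apply: divr_ge0 (mu_ok i).1 (ltW l0_gt0).
Qed.

End Optimality.
End ConvexRelaxation.

Section Existence.
Variables (R : realType) (n m : nat) (D : 'M[R]_n) (A : 'I_m -> 'M[R]_n)
  (c : 'cV[R]_n) (a : 'I_m -> 'cV[R]_n) (b : 'I_m -> R).

(* Completing the square: w z + 2 g x, on x^2 <= z, is bounded below. *)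
Lemma square_lower_bound (w g x z : R) : 0 < w -> x ^+ 2 <= z ->
  - (g ^+ 2 / w) <= w * z + 2 * g * x.
Proof.
move=> w_gt0 xz; rewrite -subr_ge0 opprK.
have -> : w * z + 2 * g * x + g ^+ 2 / w = w * (z - x ^+ 2) + (w * x + g) ^+ 2 / w.
  by field; rewrite gt_eqF.
by apply: addr_ge0; [apply: mulr_ge0 | apply: divr_ge0]; rewrite ?subr_ge0 ?sqr_ge0 ?(ltW w_gt0).
Qed.

Lemma coord_bound (w g M : R) : 0 < w -> exists B, forall x z,
  x ^+ 2 <= z -> w * z + 2 * g * x <= M -> `|x| <= B /\ `|z| <= B.
Proof.
move=> w_gt0; pose bx := 1 + (`|M| + 2 * `|g|) / w.
pose bz := (`|M| + 2 * `|g| * bx) / w.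
exists (bx + bz) => x z xz wz_le.
have cross : - (2 * g * x) <= 2 * `|g| * `|x|.
  by have := ler_norm (- (g * x)); rewrite normrN normrM; nra.
have x2 : `|x| ^+ 2 = x ^+ 2 by rewrite real_normK ?num_real.
have gx := normr_ge0 g; have xx := normr_ge0 x; have Mx := ler_norm M.
have wx2 : w * x ^+ 2 <= w * z by rewrite ler_pM2l.
have key : w * `|x| ^+ 2 <= `|M| + 2 * `|g| * `|x| by rewrite x2; lra.
have x_le : `|x| <= bx.
  rewrite /bx -lerBlDl ler_pdivlMr //.
  have [x_le1|x_gt1] := lerP `|x| 1; first by nra.
  rewrite leNgt; apply/negP => big.
  have : (`|x| - 1) * w * `|x| > (`|M| + 2 * `|g|) * `|x| by rewrite ltr_pM2r ?(lt_trans ltr01).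
  have : `|M| <= `|M| * `|x| by apply: ler_peMr; rewrite ?normr_ge0 ?ltW.
  nra.
have gbx : 2 * `|g| * `|x| <= 2 * `|g| * bx by apply: ler_wpM2l; rewrite ?mulr_ge0.
have z_le : z <= bz by rewrite /bz ler_pdivlMr // mulrC; lra.
have z_ge0 : 0 <= z by apply: le_trans xz; exact: sqr_ge0.
have bz_ge0 : 0 <= bz by exact: le_trans z_le.
by rewrite (ger0_norm z_ge0); split; lra.
Qed.

(* Under Assumption 1 (ii) the feasible region of (R) is bounded: the
   aggregated constraint sum_i y_i (constraint i) is coercive. *)
Lemma feasible_bounded (y : 'I_m -> R) : (forall i, 0 <= y i) ->
  posdef (\sum_i y i *: A i) -> forall j, exists B,
  forall p, R_feas A a b p -> `|p.1 j 0| <= B /\ `|p.2 j 0| <= B.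
Proof.
move=> y_ge0 y_pd j.
pose w l := \sum_i y i * A i l l; pose g l := \sum_i y i * a i l 0.
have w_gt0 l : 0 < w l.
  by have := posdef_diag l y_pd; rewrite summxE; under eq_bigr do rewrite mxE.
have [B HB] := coord_bound (g j) (\sum_i y i * b i + \sum_l g l ^+ 2 / w l) (w_gt0 j).
exists B => -[x z] [con_le quad_le]; apply: HB; first exact: quad_le.
pose T l := w l * z l 0 + 2 * g l * x l 0.
have aggregate : \sum_l T l = \sum_i y i * conR A a i (x, z).
  rewrite /T /conR /=; under [RHS]eq_bigr do rewrite mulrDr !mulr_sumr.
  rewrite [RHS]big_split /= [X in _ = X + _]exchange_big [X in _ = _ + X]exchange_big /=.
  rewrite -big_split /=; apply: eq_bigr => l _; rewrite /w /g -mulrA !mulr_suml mulr_sumr.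
  by congr (_ + _); apply: eq_bigr => i _; ring.
have T_lb l : 0 <= T l + g l ^+ 2 / w l.
  by rewrite -[X in _ + X]opprK subr_ge0; apply: square_lower_bound (w_gt0 l) (quad_le l).
have : T j + g j ^+ 2 / w j <= \sum_l (T l + g l ^+ 2 / w l).
  by rewrite (bigD1 j) //= lerDl; apply: sumr_ge0.
have : \sum_i y i * conR A a i (x, z) <= \sum_i y i * b i.
  by apply: ler_sum => i _; apply: ler_wpM2l => //; exact: con_le.
have := divr_ge0 (sqr_ge0 (g j)) (ltW (w_gt0 j)).
by rewrite big_split /= aggregate /T; lra.
Qed.

(* Pairs (x, z) are identified with row vectors of length n + n, so that the
   topology of matrices is available. *)
Local Notation V := 'rV[R]_(n + n).

Definition to_pair (v : V) : 'cV[R]_n * 'cV[R]_n :=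
  (\col_j v 0 (lshift n j), \col_j v 0 (rshift n j)).
Definition of_pair (p : 'cV[R]_n * 'cV[R]_n) : V := row_mx p.1^T p.2^T.

Lemma of_pairK p : to_pair (of_pair p) = p.
Proof.
by case: p => x z; congr (_, _); apply/matrixP => j k;
  rewrite mxE ?row_mxEl ?row_mxEr mxE (ord1 k).
Qed.

Lemma continuous_comb (F : 'I_n -> R) (idx : 'I_n -> 'I_(n + n)) :
  continuous (fun v : V => \sum_j F j * v 0 (idx j)).
Proof.
apply: continuous_big; first exact: add_continuous.
move=> j _ v; apply: (@continuousM _ _ (fun=> F j) (fun v : V => v 0 (idx j))).
  exact: cst_continuous.
exact: coord_continuous.
Qed.

Lemma continuous_affine (F G : 'I_n -> R) : continuous (fun v : V =>
  \sum_j F j * (to_pair v).2 j 0 + 2 * \sum_j G j * (to_pair v).1 j 0).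
Proof.
have -> : (fun v : V => \sum_j F j * (to_pair v).2 j 0 + 2 * \sum_j G j * (to_pair v).1 j 0)
    = (fun v : V => \sum_j F j * v 0 (rshift n j) + 2 * \sum_j G j * v 0 (lshift n j)).
  by apply/funext => v; congr (_ + 2 * _); apply: eq_bigr => j _; rewrite mxE.
move=> v; apply: (@continuousD _ _ _ (fun v : V => \sum_j F j * v 0 (rshift n j))
  (fun v : V => 2 * \sum_j G j * v 0 (lshift n j))); first exact: continuous_comb.
apply: (@continuousM _ _ (fun=> 2) (fun v : V => \sum_j G j * v 0 (lshift n j))).
  exact: cst_continuous.
exact: continuous_comb.
Qed.

Lemma continuous_quad j :
  continuous (fun v : V => (to_pair v).1 j 0 ^+ 2 - (to_pair v).2 j 0).
Proof.
have -> : (fun v : V => (to_pair v).1 j 0 ^+ 2 - (to_pair v).2 j 0) =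
    (fun v : V => v 0 (lshift n j) * v 0 (lshift n j) - v 0 (rshift n j)).
  by apply/funext => v; rewrite !mxE expr2.
move=> v; apply: (@continuousD _ _ _ (fun v : V => v 0 (lshift n j) * v 0 (lshift n j))
  (fun v : V => - v 0 (rshift n j))).
  by apply: (@continuousM _ _ (fun v : V => v 0 (lshift n j)) (fun v : V => v 0 (lshift n j)));
    exact: coord_continuous.
by apply: (@continuousN _ _ _ (fun v : V => v 0 (rshift n j))); exact: coord_continuous.
Qed.

Lemma closed_le0 (f : V -> R) : continuous f -> closed (f @^-1` [set r | r <= 0]).
Proof. by move=> f_cont; apply: (proj1 (continuous_closedP _)); last exact: closed_le. Qed.

Lemma feasible_closed : closed [set v : V | R_feas A a b (to_pair v)].
Proof.
have -> : [set v : V | R_feas A a b (to_pair v)] =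
    \bigcap_(i in setT) [set v | conR A a i (to_pair v) - b i <= 0] `&`
    \bigcap_(j in setT) [set v | (to_pair v).1 j 0 ^+ 2 - (to_pair v).2 j 0 <= 0].
  apply/seteqP; split => v /=.
    move=> [con_le quad_le]; split => [i _|j _] /=; rewrite subr_le0;
      [exact: con_le | exact: quad_le].
  by move=> [con_le quad_le]; split => [i|j]; rewrite -subr_le0; [exact: con_le | exact: quad_le].
apply: closedI; apply: closed_bigI => k _; apply: closed_le0; last exact: continuous_quad.
move=> v; apply: (@continuousB _ _ _ (fun v : V => conR A a k (to_pair v)) (fun=> b k)).
  exact: continuous_affine.
exact: cst_continuous.
Qed.

(* Existence of a minimizer of (R): a continuous objective on a nonempty
   compact (closed and, by [feasible_bounded], bounded) feasible region. *)
Theorem exists_minimizer : (exists p, R_feas A a b p) ->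
  (exists y : 'I_m -> R, (forall i, 0 <= y i) /\ posdef (\sum_i y i *: A i)) ->
  exists x z, R_feas A a b (x, z) /\
    forall p, R_feas A a b p -> objR D c (x, z) <= objR D c p.
Proof.
move=> [p0 feas0] [y [y_ge0 y_pd]].
have [B HB] := fin_all_exists (feasible_bounded y_ge0 y_pd).
pose Bd := \sum_j `|B j|.
have B_le j : B j <= Bd.
  by apply: le_trans (ler_norm _) _; rewrite /Bd (bigD1 j) //= lerDl; apply: sumr_ge0.
pose Fe := [set v : V | R_feas A a b (to_pair v)].
pose Box := [set v : V | forall k, (fun=> `[- Bd, Bd]%classic) k (v ord0 k)].
have Fe_Box : Fe `<=` Box.
  move=> v v_feas k /=; rewrite in_itv /= -ler_norml.
  case: (split_ordP k) => j ->; apply: le_trans (B_le j); have [x_le z_le] := HB j _ v_feas.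
  - by move: x_le; rewrite /= mxE.
  - by move: z_le; rewrite /= mxE.
have Fe_compact : compact Fe.
  apply: subclosed_compact feasible_closed _ Fe_Box.
  by apply: rV_compact => _; exact: segment_compact.
have Fe_ne : Fe !=set0 by exists (of_pair p0); rewrite /Fe /= of_pairK.
have obj_cont : {within Fe, continuous (fun v => objR D c (to_pair v))}.
  by apply: continuous_subspaceT => v; exact: continuous_affine.
have [v Fe_v v_min] := compact_EVT_min Fe_ne Fe_compact obj_cont.
exists (to_pair v).1, (to_pair v).2; rewrite -surjective_pairing.
split => [|p p_feas]; first by move: Fe_v; rewrite inE.
by have := v_min (of_pair p); rewrite of_pairK; apply; rewrite inE /Fe /= of_pairK.
Qed.

End Existence.

Section Relaxations.
Variables (R : realType) (n m : nat) (D : 'M[R]_n) (A : 'I_m -> 'M[R]_n)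
  (c : 'cV[R]_n) (a : 'I_m -> 'cV[R]_n) (b : 'I_m -> R).

Definition diag_col (X : 'M[R]_n) : 'cV[R]_n := \col_j X j j.

Lemma P_to_S x : P_feas A a b x ->
  S_feas A a b (x, x *m x^T) /\ frob D (x *m x^T) + 2 * linf c x = quadf D x + 2 * linf c x.
Proof.
move=> P_x; rewrite frob_outer; split=> //; split=> [i|] /=; first by rewrite frob_outer.
rewrite subrr; split; first by rewrite trmx0.
by move=> v; rewrite /quadf mulmx0 mul0mx mxE.
Qed.

Lemma sum_diag_col (F : 'I_n -> R) X : \sum_j F j * diag_col X j 0 = \sum_j F j * X j j.
Proof. by apply: eq_bigr => j _; rewrite mxE. Qed.

Hypothesis A_diag : forall i, is_diag_mx (A i).

Lemma S_to_R p : S_feas A a b p -> R_feas A a b (p.1, diag_col p.2).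
Proof.
case: p => x X [con_le psd_X]; split=> [i|j] /=.
  by have := con_le i; rewrite frob_diag // linfE sum_diag_col.
have := psd_diag j psd_X.
by rewrite /= [(X - _) j j]mxE [X in _ + X]mxE outer_diag subr_ge0 mxE.
Qed.

Hypothesis D_diag : is_diag_mx D.

Lemma S_to_R_value p : objR D c (p.1, diag_col p.2) = frob D p.2 + 2 * linf c p.1.
Proof. by rewrite /objR /= sum_diag_col frob_diag // linfE. Qed.

Lemma tight_to_P x z : R_feas A a b (x, z) -> (forall j, z j 0 = x j 0 ^+ 2) ->
  P_feas A a b x /\ quadf D x + 2 * linf c x = objR D c (x, z).
Proof.
move=> [con_le _] tight.
have sq (M : 'M[R]_n) : \sum_j M j j * z j 0 = \sum_j M j j * x j 0 ^+ 2.
  by apply: eq_bigr => j _; rewrite tight.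
split=> [i|]; last by rewrite quadf_diag // linfE /objR /= sq.
by have := con_le i; rewrite /= sq quadf_diag // linfE.
Qed.

(* Assumption 1 (iii) yields a Slater point of (R): enlarge the diagonal of
   an interior point of (S) by half the radius. *)
Lemma slater_R : S_nonempty_interior A a b ->
  exists xs zs, (forall i, conR A a i (xs, zs) <= b i) /\ forall j, xs j 0 ^+ 2 < zs j 0.
Proof.
move=> [x0 [X0 [X0_sym [e e_gt0 ball_S]]]].
have e2_gt0 : 0 < e / 2 by rewrite divr_gt0.
have e2_lt : e / 2 < e by rewrite ltr_pdivrMr // ltr_pMr // ltr1n.
have S_X0 : S_feas A a b (x0, X0) by apply: ball_S => // [j|j k]; rewrite subrr normr0.
have S_X1 : S_feas A a b (x0, X0 + (e / 2)%:M).
  apply: ball_S => [|j|j k]; first by rewrite linearD /= X0_sym tr_scalar_mx.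
    by rewrite subrr normr0.
  rewrite !mxE addrAC subrr add0r.
  by case: (j == k); rewrite ?mulr1n ?mulr0n ?normr0 // gtr0_norm.
exists x0, (diag_col (X0 + (e / 2)%:M)); split => [i|j].
  by have [con_le _] := S_to_R S_X1; exact: con_le.
have [_ quad_le] := S_to_R S_X0; have := quad_le j.
by rewrite /= !mxE eqxx mulr1n; lra.
Qed.

End Relaxations.

Lemma ereal_inf_le_image (R : realType) (T U : Type) (P : set T) (Q : set U)
    (f : T -> R) (g : U -> R) :
  (forall u, Q u -> exists2 t, P t & f t <= g u) ->
  (ereal_inf [set (f t)%:E | t in P] <= ereal_inf [set (g u)%:E | u in Q])%E.
Proof.
move=> dom; apply: le_ereal_inf_tmp => _ [u Q_u <-]; have [t P_t le_tu] := dom u Q_u.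
apply: (@le_trans _ _ (f t)%:E); last by rewrite lee_fin.
by apply: ereal_inf_lbound; exists t.
Qed.

Theorem theorem2 (R : realType) (n m : nat) (D : 'M[R]_n) (A : 'I_m -> 'M[R]_n)
    (c : 'cV[R]_n) (a : 'I_m -> 'cV[R]_n) (b : 'I_m -> R) :
  is_diag_mx D -> (forall i, is_diag_mx (A i)) ->
  Assumption1 A a b ->
  (forall k : 'I_n, S_set D A c a k = set0) ->
  pstar D A c a b = vstar D A c a b /\ vstar D A c a b = cstar D A c a b.
Proof.
move=> D_diag A_diag [[x0 P_x0] [y_pd interior]] S_empty.
have [x [z [feas opt]]] := exists_minimizer D c
  (ex_intro _ _ (S_to_R A_diag (P_to_S D c P_x0).1)) y_pd.
have [xs [zs [slater_con slater_quad]]] := slater_R A_diag interior.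
have tight := optimum_tight feas opt slater_con slater_quad S_empty.
have pv : (pstar D A c a b <= vstar D A c a b)%E.
  apply: ereal_inf_le_image => p S_p; exists (p.1, diag_col p.2).
    exact: (S_to_R A_diag S_p).
  by have := S_to_R_value c D_diag p; rewrite /objR => ->.
have vc : (vstar D A c a b <= cstar D A c a b)%E.
  apply: ereal_inf_le_image => x' /(P_to_S D c) [S_x' val].
  by exists (x', x' *m x'^T) => //; rewrite val.
have cp : (cstar D A c a b <= pstar D A c a b)%E.
  have [P_x val] := tight_to_P c A_diag D_diag feas tight.
  by apply: ereal_inf_le_image => p R_p; exists x => //; rewrite val; exact: opt.
by split; apply/eqP; rewrite eq_le ?pv ?vc ?(le_trans vc cp) ?(le_trans cp pv).
Qed.
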